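(* Let $\mathcal{A}$ be an additive category. Then $\mathcal{A}$ is Noetherian if and only if every object $A$ of $\mathcal{A}$ has the following property: for every directed set $I$ and every collection of morphisms $\{f_i\colon A_i\to A\mid i\in I\}$ with target $A$ such that $f_i\subseteq f_j$ whenever $i\le j$, there exists $i_0\in I$ with $f_i\subseteq f_{i_0}$ for all $i\in I$.
   Context: For morphisms $f\colon A\to B$ and $f'\colon A'\to B$ in $\mathcal{A}$ one writes $f\subseteq f'$ if there is a morphism $g\colon A\to A'$ with $f=f'\circ g$. A $\mathbb{Z}\mathcal{A}$-module is an additive contravariant functor $\mathcal{A}\to$ abelian groups; it is finitely generated if it is a quotient of a finite direct sum of representables $\mathrm{mor}_{\mathcal{A}}(?,A_j)$. $\mathcal{A}$ is Noetherian if every $\mathbb{Z}\mathcal{A}$-submodule of a finitely generated $\mathbb{Z}\mathcal{A}$-module is finitely generated. *)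

From HB Require Import structures.
From mathcomp Require Import all_boot all_algebra.
Set Implicit Arguments. Unset Strict Implicit. Unset Printing Implicit Defensive.
Import GRing.Theory.
Local Open Scope ring_scope.

Record AddCat := {
  Obj : Type;
  Hom : Obj -> Obj -> zmodType;
  comp : forall A B C : Obj, Hom B C -> Hom A B -> Hom A C;
  idm : forall A : Obj, Hom A A;
  comp_assoc : forall (A B C D : Obj) (h : Hom C D) (g : Hom B C) (f : Hom A B),
      comp h (comp g f) = comp (comp h g) f;
  comp_id_l : forall (A B : Obj) (f : Hom A B), comp (idm B) f = f;
  comp_id_r : forall (A B : Obj) (f : Hom A B), comp f (idm A) = f;
  comp_addl : forall (A B C : Obj) (g g' : Hom B C) (f : Hom A B),
      comp (g + g') f = comp g f + comp g' f;
  comp_addr : forall (A B C : Obj) (g : Hom B C) (f f' : Hom A B),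
      comp g (f + f') = comp g f + comp g f';
  zero_object : exists Z : Obj, idm Z = 0;
  biproducts : forall A B : Obj, exists (P : Obj) (i1 : Hom A P) (i2 : Hom B P)
      (p1 : Hom P A) (p2 : Hom P B),
      [/\ comp p1 i1 = idm A, comp p2 i2 = idm B,
          comp p1 i2 = 0, comp p2 i1 = 0 &
          comp i1 p1 + comp i2 p2 = idm P]
}.
Arguments comp {a A B C}.
Arguments idm {a}.
Arguments Hom a : clear implicits.

Definition subobj (C : AddCat) (A A' B : Obj C) (f : Hom C A B) (f' : Hom C A' B) :=
  exists g : Hom C A A', f = comp f' g.

Record ZAmod (C : AddCat) := {
  Mob : Obj C -> zmodType;
  Mact : forall A B : Obj C, Hom C A B -> Mob B -> Mob A;
  Mact_add : forall (A B : Obj C) (f : Hom C A B) (x y : Mob B),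
      Mact f (x + y) = Mact f x + Mact f y;
  Mact_addf : forall (A B : Obj C) (f g : Hom C A B) (x : Mob B),
      Mact (f + g) x = Mact f x + Mact g x;
  Mact_id : forall (A : Obj C) (x : Mob A), Mact (idm A) x = x;
  Mact_comp : forall (A B D : Obj C) (f : Hom C A B) (g : Hom C B D) (x : Mob D),
      Mact (comp g f) x = Mact f (Mact g x)
}.
Arguments Mob {C} z.
Arguments Mact {C} z {A B}.

Definition submodule (C : AddCat) (M : ZAmod C) (N : forall A : Obj C, Mob M A -> Prop) :=
  [/\ forall A, N A 0,
      forall A (x y : Mob M A), N A x -> N A y -> N A (x - y) &
      forall A B (f : Hom C A B) (x : Mob M B), N B x -> N A (Mact M f x)].

(* The submodule N of M is finitely generated: there is a natural additive
   transformation from a finite direct sum of representables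
   (+)_{j<n} mor(?, As j) to M whose image is exactly N (i.e. N is a quotient
   of that direct sum). *)
Definition fg_sub (C : AddCat) (M : ZAmod C) (N : forall A : Obj C, Mob M A -> Prop) :=
  exists (n : nat) (As : 'I_n -> Obj C)
         (eta : forall X : Obj C, (forall j : 'I_n, Hom C X (As j)) -> Mob M X),
    [/\ forall X (g h : forall j, Hom C X (As j)),
          eta X (fun j => g j + h j) = eta X g + eta X h,
        forall X Y (f : Hom C Y X) (g : forall j, Hom C X (As j)),
          eta Y (fun j => comp (g j) f) = Mact M f (eta X g) &
        forall X (x : Mob M X), N X x <-> exists g, eta X g = x].

Definition fg_module (C : AddCat) (M : ZAmod C) := @fg_sub C M (fun _ _ => True).

Definition Noetherian (C : AddCat) :=
  forall M : ZAmod C, fg_module M ->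
    forall N, @submodule C M N -> @fg_sub C M N.

Definition directed (I : Type) (le : I -> I -> Prop) :=
  [/\ inhabited I, (forall i, le i i),
      (forall i j k, le i j -> le j k -> le i k) &
      (forall i j, exists k, le i k /\ le j k)].

Definition stabilizes (C : AddCat) (A : Obj C) :=
  forall (I : Type) (le : I -> I -> Prop), directed le ->
  forall (Ai : I -> Obj C) (f : forall i, Hom C (Ai i) A),
    (forall i j, le i j -> subobj (f i) (f j)) ->
    exists i0, forall i, subobj (f i) (f i0).

(* In an additive category a finite direct sum of representable functors
   mor(?, A_j) is itself representable, by the biproduct P of the A_j, so a
   ZA-module is finitely generated iff it is generated by a single element
   x of M(P).  A submodule of mor(?, P) is a family of morphisms into P closed
   under precomposition and sums, and it is directed under factorisation: h and
   h' both factor through h p1 + h' p2 on the biproduct of their sources.  Such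
   a submodule is generated by one element exactly when this directed family
   has a largest member.  Noetherianity applied to the submodule of mor(?, A)
   spanned by a directed family f_i therefore yields the chain condition; and
   conversely, for N a submodule of M generated by x in M(P), the chain
   condition on P makes the preimage of N in mor(?, P), hence N itself, singly
   generated. *)

From Pilot Require Import Defs.
From mathcomp Require Import all_boot all_algebra.
From Stdlib Require Import FunctionalExtensionality.
Set Implicit Arguments. Unset Strict Implicit. Unset Printing Implicit Defensive.
Import GRing.Theory.
Local Open Scope ring_scope.
Local Notation Hom := Defs.Hom.
Local Notation comp := Defs.comp.

Section AdditiveCategory.
Variable C : AddCat.

Lemma comp0l (A B D : Obj C) (f : Hom C A B) : comp (0 : Hom C B D) f = 0.
Proof.
apply: (addrI (comp (0 : Hom C B D) f)).
by rewrite -comp_addl !addr0.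
Qed.

Lemma comp0r (A B D : Obj C) (g : Hom C B D) : comp g (0 : Hom C A B) = 0.
Proof.
apply: (addrI (comp g (0 : Hom C A B))).
by rewrite -comp_addr !addr0.
Qed.

Lemma comp_oppr (A B D : Obj C) (g : Hom C B D) (f : Hom C A B) :
  comp g (- f) = - comp g f.
Proof. by apply/eqP; rewrite -addr_eq0 -comp_addr addNr comp0r. Qed.

Lemma weak_product (I : eqType) (As : I -> Obj C) (s : seq I) :
  exists (P : Obj C) (pi : forall k, Hom C P (As k)),
    forall X (t : forall k, Hom C X (As k)),
      exists h : Hom C X P, forall k, k \in s -> comp (pi k) h = t k.
Proof.
elim: s => [|a s [P [pi factor]]].
  have [Z _] := zero_object C.
  by exists Z, (fun _ => 0) => X t; exists 0.
have [Q [i1 [i2 [p1 [p2 [p1i1 p2i2 p1i2 p2i1 _]]]]]] := biproducts (As a) P.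
pose T k := Hom C Q (As k).
(* [tagged_as u v] is [v] cast to the index of [u] when the indices agree and
   [u] otherwise: the projection is [p1] at [a], and [pi k] after [p2] at k. *)
exists Q, (fun k => tagged_as (Tagged T (comp (pi k) p2)) (Tagged T p1)) => X t.
have [h th] := factor X t.
exists (comp i1 (t a) + comp i2 h) => k; rewrite in_cons.
case: (eqVneq k a) => [->|ka] /= ks.
  by rewrite tagged_asE comp_addr !comp_assoc p1i1 p1i2 comp0l comp_id_l addr0.
rewrite /tagged_as /=; case: eqP => [ka'|_]; first by rewrite ka' eqxx in ka.
rewrite -comp_assoc comp_addr !comp_assoc p2i1 p2i2 comp0l comp_id_l add0r.
exact: th.
Qed.

Definition representable (A : Obj C) : ZAmod C := {|
  Mob := fun X => Hom C X A;
  Mact := fun X Y f g => comp g f;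
  Mact_add := fun X Y f g g' => comp_addl g g' f;
  Mact_addf := fun X Y f f' g => comp_addr g f f';
  Mact_id := fun X g => comp_id_r g;
  Mact_comp := fun X Y Z f g h => comp_assoc h g f |}.

Section Modules.
Variable M : ZAmod C.

Lemma Mact0f (A B : Obj C) (x : Mob M B) : Mact M (0 : Hom C A B) x = 0.
Proof.
apply: (addrI (Mact M (0 : Hom C A B) x)).
by rewrite -Mact_addf !addr0.
Qed.

Lemma MactNf (A B : Obj C) (f : Hom C A B) (x : Mob M B) :
  Mact M (- f) x = - Mact M f x.
Proof. by apply/eqP; rewrite -addr_eq0 -Mact_addf addNr Mact0f. Qed.

Lemma submoduleD (N : forall A, Mob M A -> Prop) (A : Obj C) (x y : Mob M A) :
  submodule N -> N A x -> N A y -> N A (x + y).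
Proof.
move=> [N0 NB _] Nx Ny.
by have := NB A x (0 - y) Nx (NB A 0 y (N0 A) Ny); rewrite sub0r opprK.
Qed.

Definition generates (N : forall A, Mob M A -> Prop) (P : Obj C)
    (x : Mob M P) :=
  forall X (y : Mob M X), N X y <-> exists h : Hom C X P, y = Mact M h x.

Definition principal (N : forall A, Mob M A -> Prop) :=
  exists (P : Obj C) (x : Mob M P), generates N x.

Lemma fg_subP (N : forall A, Mob M A -> Prop) : fg_sub N <-> principal N.
Proof.
split.
  move=> [n [As [eta [_ eta_nat eta_onto]]]].
  have [P [pi factor]] := weak_product As (enum 'I_n).
  exists P, (eta P pi) => X y; split=> [/eta_onto [t <-]|[h ->]].
    have [h pi_h] := factor X t; exists h; rewrite -eta_nat.
    congr (eta X _); apply: functional_extensionality_dep => k.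
    by rewrite pi_h ?mem_enum.
  by apply/eta_onto; exists (fun k => comp (pi k) h); apply: eta_nat.
move=> [P [x gen]].
exists 1%N, (fun _ => P), (fun X g => Mact M (g ord0) x); split.
- by move=> X g h; rewrite Mact_addf.
- by move=> X Y f g; rewrite Mact_comp.
- move=> X y; split=> [/gen [h ->]|[g <-]]; first by exists (fun _ => h).
  by apply/gen; exists (g ord0).
Qed.

Definition sub_preimage (N : forall A, Mob M A -> Prop) (P : Obj C)
    (x : Mob M P) (Y : Obj C) (h : Hom C Y P) :=
  N Y (Mact M h x).

Lemma submodule_preimage (N : forall A, Mob M A -> Prop) (P : Obj C)
    (x : Mob M P) :
  submodule N -> @submodule C (representable P) (sub_preimage N x).
Proof.
move=> [N0 NB Nact]; split.
- by move=> Y; rewrite /sub_preimage Mact0f.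
- by move=> Y h h' Nh Nh'; rewrite /sub_preimage Mact_addf MactNf; apply: NB.
- by move=> Y Y' f h Nh; rewrite /sub_preimage /= Mact_comp; apply: Nact.
Qed.

End Modules.

Lemma generates_preimage (M : ZAmod C) (N : forall A, Mob M A -> Prop)
    (P : Obj C) (x : Mob M P) (Y : Obj C) (h0 : Hom C Y P) :
  @generates M (fun _ _ => True) P x ->
  @generates (representable P) (sub_preimage N x) Y h0 ->
  @generates M N Y (Mact M h0 x).
Proof.
move=> genM genN X y; split=> [Ny|[g ->]].
  have [h y_h] := (genM X y).1 I.
  have [g h_g] : exists g, h = comp h0 g.
    by apply/(genN X h); rewrite /sub_preimage -y_h.
  by exists g; rewrite y_h h_g /= Mact_comp.
by rewrite -Mact_comp; apply: (genN X (comp h0 g)).2; exists g.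
Qed.

Lemma representable_principal (A : Obj C) :
  @principal (representable A) (fun _ _ => True).
Proof.
by exists A, (idm A) => X h; split=> // _; exists h; rewrite /= comp_id_l.
Qed.

Section Representable.
Variable P : Obj C.

Definition elements (N : forall Y, Hom C Y P -> Prop) :=
  {Y : Obj C & {h : Hom C Y P | N Y h}}.

Definition element_mor (N : forall Y, Hom C Y P -> Prop) (i : elements N) :
  Hom C (projT1 i) P := sval (projT2 i).

Lemma directed_elements (N : forall Y, Hom C Y P -> Prop) :
  @submodule C (representable P) N ->
  directed (fun i j : elements N => subobj (element_mor i) (element_mor j)).
Proof.
move=> sN; have [N0 _ Nact] := sN; split.
- exact: inhabits (existT _ P (exist _ 0 (N0 P))).
- by move=> i; exists (idm _); rewrite comp_id_r.
- by move=> i j k [g ->] [g' ->]; exists (comp g' g); rewrite comp_assoc.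
move=> [Y [h Nh]] [Y' [h' Nh']].
have [Q [i1 [i2 [p1 [p2 [p1i1 p2i2 p1i2 p2i1 _]]]]]] := biproducts Y Y'.
have NQ : N Q (comp h p1 + comp h' p2).
  by apply: (submoduleD sN); apply: Nact.
exists (existT _ Q (exist _ _ NQ)); rewrite /element_mor /=.
split; [exists i1 | exists i2]; rewrite comp_addl -!comp_assoc.
  by rewrite p1i1 p2i1 comp_id_r comp0r addr0.
by rewrite p1i2 p2i2 comp_id_r comp0r add0r.
Qed.

Lemma principal_of_stabilizes (N : forall Y, Hom C Y P -> Prop) :
  stabilizes P -> @submodule C (representable P) N ->
  @principal (representable P) N.
Proof.
move=> stabP sN.
have [i0 top] :=
  stabP _ _ (directed_elements sN) _ (@element_mor N) (fun _ _ ij => ij).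
have [_ _ Nact] := sN.
exists (projT1 i0), (element_mor i0) => X y; split=> [Ny|[g ->]].
  exact: top (existT _ X (exist _ y Ny)).
exact: Nact (svalP (projT2 i0)).
Qed.

Lemma submodule_below_directed (I : Type) (le : I -> I -> Prop)
    (Ai : I -> Obj C) (f : forall i, Hom C (Ai i) P) :
  directed le -> (forall i j, le i j -> subobj (f i) (f j)) ->
  @submodule C (representable P) (fun Y h => exists i, subobj h (f i)).
Proof.
move=> [[i] _ _ up] mono; split.
- by move=> Y; exists i, 0; rewrite comp0r.
- move=> Y h h' [j [g ->]] [j' [g' ->]].
  have [k [jk j'k]] := up j j'.
  have [[a fa] [b fb]] := (mono _ _ jk, mono _ _ j'k).
  exists k, (comp a g - comp b g').
  by rewrite comp_addr comp_oppr !comp_assoc -fa -fb.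
- by move=> Y Y' f' h [j [g ->]]; exists j, (comp g f'); rewrite /= comp_assoc.
Qed.

Lemma stabilizes_of_principal :
  (forall N, @submodule C (representable P) N -> @principal (representable P) N) ->
  stabilizes P.
Proof.
move=> prin I le dir Ai f mono.
have [Y [h gen]] := prin _ (submodule_below_directed dir mono).
have [i0 [g0 h_g0]] : exists i, subobj h (f i).
  by apply/gen; exists (idm Y); rewrite /= comp_id_r.
exists i0 => i.
have [g ->] : exists g, f i = comp h g.
  by apply/gen; exists i, (idm _); rewrite comp_id_r.
by exists (comp g0 g); rewrite h_g0 comp_assoc.
Qed.

End Representable.

End AdditiveCategory.

Theorem mainTheorem13 (C : AddCat) :
  Noetherian C <-> (forall A : Obj C, stabilizes A).
Proof.
split=> [noeth A | stab M fgM N sN].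
  apply: stabilizes_of_principal => N sN.
  apply/fg_subP; apply: noeth sN.
  by apply/fg_subP; apply: representable_principal.
have /fg_subP [P [x genM]] := fgM.
have [Y [h0 genN]] :=
  principal_of_stabilizes (stab P) (submodule_preimage x sN).
by apply/fg_subP; exists Y, (Mact M h0 x); apply: generates_preimage genM genN.
Qed.
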